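(* Let $(A,B)$ be a definite pencil. If $0<\epsilon<\gamma(A,B)$, then $$\Lambda^{\mathrm{sym}}_\epsilon(A,B)=\left\{z\in\mathbb{C}:\ \sigma_{\min}(A-zB)\le\epsilon\sqrt{1+|z|^2}\right\}\cap\mathbb{R}.$$
   Context: A pencil $(A,B)$ of $n\times n$ complex matrices is definite if $A,B$ are Hermitian and $\gamma(A,B)=\min_{\|x\|_2=1}|x^H(A+iB)x|>0$. For $\epsilon>0$, the symmetric $\epsilon$-pseudospectrum is $\Lambda^{\mathrm{sym}}_\epsilon(A,B)=\{z\in\mathbb{C}:(A+E)u=z(B+F)u$ for some $u\ne0$ and Hermitian $E,F$ with $\sqrt{\|E\|_2^2+\|F\|_2^2}\le\epsilon\}$. $\sigma_{\min}$ denotes the smallest singular value. *)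

From HB Require Import structures.
From mathcomp Require Import all_boot all_order all_algebra.
From mathcomp Require Import complex.
From mathcomp Require Import boolp classical_sets reals.
Set Implicit Arguments. Unset Strict Implicit. Unset Printing Implicit Defensive.
Import Order.TTheory GRing.Theory Num.Theory.
Local Open Scope ring_scope.
Local Open Scope classical_set_scope.

Section Defs.
Variable R : realType.
Local Notation C := (R[i]).
Definition cabs (z : C) : R := ComplexField.Normc.normc z.

Definition ctrmx (m n : nat) (M : 'M[C]_(m, n)) : 'M[C]_(n, m) :=
  map_mx Num.conj (M^T).

Definition hermitian (n : nat) (M : 'M[C]_n) : Prop := ctrmx M = M.

Definition vnorm2 (n : nat) (x : 'cV[C]_n) : R :=
  Num.sqrt (\sum_(i < n) cabs (x i 0) ^+ 2).

Definition unit_sphere (n : nat) : set 'cV[C]_n := [set x | vnorm2 x = 1].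

Definition opnorm2 (n : nat) (M : 'M[C]_n) : R :=
  sup [set vnorm2 (M *m x) | x in @unit_sphere n].

Definition sigma_min (n : nat) (M : 'M[C]_n) : R :=
  inf [set vnorm2 (M *m x) | x in @unit_sphere n].

Definition crawford (n : nat) (A B : 'M[C]_n) : R :=
  inf [set cabs ((ctrmx x *m (A + 'i%C *: B) *m x) 0 0) | x in @unit_sphere n].

Definition definite_pencil (n : nat) (A B : 'M[C]_n) : Prop :=
  [/\ hermitian A, hermitian B & 0 < crawford A B].

Definition sym_pseudospectrum (n : nat) (eps : R) (A B : 'M[C]_n) : set C :=
  [set z | exists (u : 'cV[C]_n) (E F : 'M[C]_n),
     [/\ u != 0, hermitian E, hermitian F,
         Num.sqrt (opnorm2 E ^+ 2 + opnorm2 F ^+ 2) <= eps &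
         (A + E) *m u = z *: ((B + F) *m u)]].

End Defs.

From Pilot Require Import Defs.
From HB Require Import structures.
From mathcomp Require Import all_boot all_order all_algebra.
From mathcomp Require Import complex.
From mathcomp Require Import boolp classical_sets reals.
From mathcomp Require Import ring lra.
Import Order.TTheory GRing.Theory Num.Theory.
Local Open Scope ring_scope.
Local Open Scope complex_scope.
Local Open Scope classical_set_scope.
Set Implicit Arguments. Unset Strict Implicit. Unset Printing Implicit Defensive.

(* Let x be a unit vector with (A + E) x = z (B + F) x.  The numbers
   a = x^H (A + E) x and b = x^H (B + F) x are real and a = z b.  Since
   |x^H (E + iF) x| <= sqrt(||E||^2 + ||F||^2) <= eps < gamma(A, B) <= |x^H (A + iB) x|,
   a + ib cannot vanish, hence b <> 0 and z = a / b is real.  Moreover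
   (A - zB) x = z F x - E x, so by Cauchy-Schwarz in R^2
   sigma_min(A - zB) <= |z| ||F|| + ||E|| <= sqrt(1 + |z|^2) eps.
   Conversely, for real z = r the matrix A - rB is Hermitian; take an eigenpair
   (u, l) with |l| minimal, so |l| <= sigma_min(A - rB).  The scalar perturbations
   E = -l/(1+r^2) I and F = r l/(1+r^2) I satisfy (A + E) u = r (B + F) u and
   sqrt(||E||^2 + ||F||^2) = |l| / sqrt(1 + r^2) <= eps. *)


Section PencilPseudospectrum.
Variable R : realType.
Local Notation C := R[i].

Lemma cabs_ge0 (z : C) : 0 <= cabs z.
Proof. by case: z => a b; apply: sqrtr_ge0. Qed.

Lemma cabs_real (r : R) : cabs r%:C = `|r|.
Proof. by rewrite /cabs /= expr0n addr0 sqrtr_sqr. Qed.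

Lemma cabsM (a b : C) : cabs (a * b) = cabs a * cabs b.
Proof. exact: ComplexField.Normc.normcM. Qed.

Lemma cabsN (z : C) : cabs (- z) = cabs z.
Proof.
by rewrite -mulN1r cabsM -(rmorphN1 (real_complex R)) cabs_real normrN1 mul1r.
Qed.

Lemma cabs_rect (a b : R) : cabs (a%:C + 'i * b%:C) = Num.sqrt (a ^+ 2 + b ^+ 2).
Proof. by rewrite /cabs /= !mul0r !mul1r subr0 !add0r addr0. Qed.

Lemma conj_real (r : R) : Num.conj (r%:C : C) = r%:C.
Proof. exact: conjc_real. Qed.

Lemma conj_fixed_realE (w : C) : Num.conj w = w -> w = (complex.Re w)%:C.
Proof.
case: w => a b [] b_eq.
by apply/eqP; rewrite eq_complex /= eqxx /=; apply/eqP; lra.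
Qed.

Lemma ctrmxK m k (M : 'M[C]_(m, k)) : ctrmx (ctrmx M) = M.
Proof. by apply/matrixP => i j; rewrite !mxE conjCK. Qed.

Lemma ctrmxD m k (M N : 'M[C]_(m, k)) : ctrmx (M + N) = ctrmx M + ctrmx N.
Proof. by apply/matrixP => i j; rewrite !mxE rmorphD. Qed.

Lemma ctrmxZ m k c (M : 'M[C]_(m, k)) : ctrmx (c *: M) = Num.conj c *: ctrmx M.
Proof. by apply/matrixP => i j; rewrite !mxE rmorphM. Qed.

Lemma ctrmxM m k l (M : 'M[C]_(m, k)) (N : 'M[C]_(k, l)) :
  ctrmx (M *m N) = ctrmx N *m ctrmx M.
Proof. by rewrite /ctrmx trmx_mul map_mxM. Qed.

Lemma hermitianD m (M N : 'M[C]_m) :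
  Defs.hermitian M -> Defs.hermitian N -> Defs.hermitian (M + N).
Proof. by rewrite /Defs.hermitian ctrmxD => -> ->. Qed.

Lemma hermitianBZ m (r : R) (M N : 'M[C]_m) :
  Defs.hermitian M -> Defs.hermitian N -> Defs.hermitian (M - r%:C *: N).
Proof.
move=> hM hN; rewrite /Defs.hermitian ctrmxD -scaleNr ctrmxZ hM hN.
by rewrite -rmorphN conj_real.
Qed.

Lemma hermitian_real_scalar m (r : R) : Defs.hermitian (r%:C%:M : 'M[C]_m).
Proof. by rewrite /Defs.hermitian /ctrmx tr_scalar_mx map_scalar_mx /= conj_real. Qed.

Lemma hermitian_hermsymmx m (M : 'M[C]_m) : Defs.hermitian M -> M \is hermsymmx.
Proof. by move=> hM; apply/is_hermitianmxP; rewrite expr0 scale1r; exact/esym. Qed.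

Definition hdot m (x y : 'cV[C]_m) : C := (ctrmx x *m y) 0 0.

Lemma hdotE m (x y : 'cV[C]_m) : hdot x y = \sum_k Num.conj (x k 0) * y k 0.
Proof. by rewrite /hdot mxE; apply: eq_bigr => k _; rewrite !mxE. Qed.

Lemma hdot_dotmx m (x y : 'cV[C]_m) : hdot x y = dotmx y^T x^T.
Proof. by rewrite hdotE dotmxE mxE; apply: eq_bigr => k _; rewrite !mxE mulrC. Qed.

Lemma hdotDr m (x y z : 'cV[C]_m) : hdot x (y + z) = hdot x y + hdot x z.
Proof. by rewrite /hdot mulmxDr mxE. Qed.

Lemma hdotZr m c (x y : 'cV[C]_m) : hdot x (c *: y) = c * hdot x y.
Proof. by rewrite /hdot -scalemxAr mxE. Qed.

Lemma hermitian_hdot_real m (M : 'M[C]_m) x :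
  Defs.hermitian M -> Num.conj (hdot x (M *m x)) = hdot x (M *m x).
Proof.
move=> hM; rewrite [LHS](_ : _ = ctrmx (ctrmx x *m (M *m x)) 0 0).
  by rewrite ctrmxM ctrmxM ctrmxK hM -mulmxA.
by rewrite /hdot !mxE.
Qed.

Lemma vnorm2_ge0 m (x : 'cV[C]_m) : 0 <= vnorm2 x.
Proof. exact: sqrtr_ge0. Qed.

Lemma vnorm2_sqr m (x : 'cV[C]_m) : vnorm2 x ^+ 2 = \sum_k cabs (x k 0) ^+ 2.
Proof. by rewrite sqr_sqrtr // sumr_ge0 // => k _; rewrite exprn_ge0 // cabs_ge0. Qed.

Lemma vnorm2_sqr_hdot m (x : 'cV[C]_m) : (vnorm2 x ^+ 2)%:C = hdot x x.
Proof.
rewrite vnorm2_sqr rmorph_sum hdotE; apply: eq_bigr => k _.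
by rewrite -normCKC rmorphXn.
Qed.

Lemma vnorm2_dotmx m (x : 'cV[C]_m) : (vnorm2 x)%:C = sqrtC (dotmx x^T x^T).
Proof. by rewrite -hdot_dotmx -vnorm2_sqr_hdot rmorphXn sqrCK // ler0c vnorm2_ge0. Qed.

Lemma vnorm2_0 m : vnorm2 (0 : 'cV[C]_m) = 0.
Proof.
rewrite /vnorm2 big1 ?sqrtr0 // => k _.
by rewrite mxE /cabs ComplexField.Normc.normc0 expr0n.
Qed.

Lemma vnorm2_eq0 m (x : 'cV[C]_m) : vnorm2 x = 0 -> x = 0.
Proof.
move=> x0; have /eqP : dotmx x^T x^T = 0.
  by rewrite -hdot_dotmx -vnorm2_sqr_hdot x0 expr0n.
by rewrite dnorm_eq0 => /eqP/(congr1 trmx); rewrite trmxK trmx0.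
Qed.

Lemma vnorm2Z m c (x : 'cV[C]_m) : vnorm2 (c *: x) = cabs c * vnorm2 x.
Proof.
rewrite /vnorm2 (eq_bigr (fun k => cabs c ^+ 2 * cabs (x k 0) ^+ 2)).
  by rewrite -mulr_sumr sqrtrM ?exprn_ge0 ?cabs_ge0 // sqrtr_sqr ger0_norm ?cabs_ge0.
by move=> k _; rewrite mxE cabsM exprMn.
Qed.

Lemma ler_vnorm2B m (x y : 'cV[C]_m) : vnorm2 (x - y) <= vnorm2 x + vnorm2 y.
Proof.
have vnorm2N : vnorm2 (- y) = vnorm2 y.
  by rewrite -scaleN1r vnorm2Z -(rmorphN1 (real_complex R)) cabs_real normrN1 mul1r.
rewrite -vnorm2N -lecR rmorphD /= !vnorm2_dotmx linearD /=.
exact: (triangle_lerif (@dotmx C m) _ _).1.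
Qed.

Lemma hdot_CauchySchwarz m (x y : 'cV[C]_m) : cabs (hdot x y) <= vnorm2 x * vnorm2 y.
Proof.
rewrite -lecR rmorphM /= !vnorm2_dotmx hdot_dotmx mulrC.
exact: (CauchySchwarz_sqrt (@dotmx C m) _ _).1.
Qed.

Lemma vnorm2_unitary m (Q : 'M[C]_m) y : ctrmx Q *m Q = 1%:M ->
  vnorm2 (Q *m y) = vnorm2 y.
Proof.
move=> QtQ; apply: (fmorph_inj (real_complex R)) => /=.
rewrite !vnorm2_dotmx -!hdot_dotmx.
by rewrite /hdot ctrmxM mulmxA -(mulmxA (ctrmx y)) QtQ mulmx1.
Qed.

Lemma vnorm2_delta m (i : 'I_m) : vnorm2 (delta_mx i 0 : 'cV[C]_m) = 1.
Proof.
rewrite /vnorm2 (bigD1 i) //= big1 => [|k ki].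
  by rewrite !mxE !eqxx cabs_real normr1 expr1n addr0 sqrtr1.
by rewrite !mxE (negbTE ki) cabs_real normr0 expr0n.
Qed.

Lemma vnorm2_normalize m (x : 'cV[C]_m) : x != 0 -> vnorm2 ((vnorm2 x)^-1%:C *: x) = 1.
Proof.
move=> x0; have : vnorm2 x != 0 by apply: contra x0 => /eqP/vnorm2_eq0 ->.
by move=> /mulVf <-; rewrite vnorm2Z cabs_real ger0_norm ?invr_ge0 ?vnorm2_ge0.
Qed.

Lemma vnorm2_mulmx_bounded m (M : 'M[C]_m) :
  exists K, forall x, vnorm2 (M *m x) <= K * vnorm2 x.
Proof.
pose rowM i := ctrmx (row i M).
exists (Num.sqrt (\sum_i vnorm2 (rowM i) ^+ 2)) => x.
have Mx_row i : (M *m x) i 0 = hdot (rowM i) x.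
  by rewrite /hdot /rowM ctrmxK -row_mul [RHS]mxE.
have S_ge0 : 0 <= \sum_i vnorm2 (rowM i) ^+ 2.
  by rewrite sumr_ge0 // => i _; rewrite exprn_ge0 ?vnorm2_ge0.
rewrite -(@ler_pXn2r _ 2) ?nnegrE ?mulr_ge0 ?sqrtr_ge0 ?vnorm2_ge0 //.
rewrite vnorm2_sqr exprMn sqr_sqrtr // mulr_suml ler_sum // => i _.
rewrite Mx_row -exprMn lerXn2r ?nnegrE ?mulr_ge0 ?vnorm2_ge0 ?cabs_ge0 //.
exact: hdot_CauchySchwarz.
Qed.

Lemma opnorm2_ub m (M : 'M[C]_m) x : vnorm2 (M *m x) <= opnorm2 M * vnorm2 x.
Proof.
have [->|x0] := eqVneq x 0; first by rewrite mulmx0 vnorm2_0 mulr0.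
have x_gt0 : 0 < vnorm2 x.
  by rewrite lt_def vnorm2_ge0 andbT; apply: contra x0 => /eqP/vnorm2_eq0 ->.
pose y := (vnorm2 x)^-1%:C *: x.
have [K MK] := vnorm2_mulmx_bounded M.
have : vnorm2 (M *m y) <= opnorm2 M.
  apply: sup_upper_bound; last by exists y => //; apply: vnorm2_normalize.
  split; first by exists (vnorm2 (M *m y)), y => //; apply: vnorm2_normalize.
  by exists K => _ [z z1 <-]; rewrite -[K]mulr1 -z1 MK.
rewrite -scalemxAr vnorm2Z cabs_real ger0_norm ?invr_ge0 ?vnorm2_ge0 //.
by move=> h; rewrite -ler_pdivrMr // mulrC.
Qed.

Lemma opnorm2_ub_unit m (M : 'M[C]_m) x : vnorm2 x = 1 -> vnorm2 (M *m x) <= opnorm2 M.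
Proof. by move=> x1; rewrite -[opnorm2 M]mulr1 -x1 opnorm2_ub. Qed.

Lemma cabs_hdot_le_opnorm2 m (M : 'M[C]_m) x :
  vnorm2 x = 1 -> cabs (hdot x (M *m x)) <= opnorm2 M.
Proof.
move=> x1; apply: (le_trans (hdot_CauchySchwarz _ _)).
by rewrite x1 mul1r opnorm2_ub_unit.
Qed.

Lemma opnorm2_real_scalar m (r : R) : opnorm2 (r%:C%:M : 'M[C]_m.+1) = `|r|.
Proof.
rewrite /opnorm2 [X in sup X](_ : _ = [set `|r|]) ?sup1 //.
have Mx x : vnorm2 (r%:C%:M *m x) = `|r| * vnorm2 x.
  by rewrite mul_scalar_mx vnorm2Z cabs_real.
apply/seteqP; split => [_ [x x1 <-]|_ ->]; first by rewrite /= Mx x1 mulr1.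
by exists (delta_mx 0 0); rewrite /unit_sphere /= ?Mx vnorm2_delta ?mulr1.
Qed.

Lemma sigma_min_le m (M : 'M[C]_m) x : vnorm2 x = 1 -> sigma_min M <= vnorm2 (M *m x).
Proof.
move=> x1; apply: ge_inf; last by exists x.
by exists 0 => _ [y _ <-]; apply: vnorm2_ge0.
Qed.

Lemma crawford_le m (A B : 'M[C]_m) x : vnorm2 x = 1 ->
  crawford A B <= cabs (hdot x (A *m x) + 'i * hdot x (B *m x)).
Proof.
move=> x1; rewrite -hdotZr scalemxAl -hdotDr -mulmxDl /hdot mulmxA.
apply: ge_inf; last by exists x.
by exists 0 => _ [y _ <-]; apply: cabs_ge0.
Qed.

(* [inf set0 = 0], so no pencil of size 0 is definite. *)
Lemma crawford_dim0 (A B : 'M[C]_0) : crawford A B = 0.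
Proof.
rewrite /crawford [X in inf X](_ : _ = set0) ?inf0 //.
apply/seteqP; split => // y [x x1 _]; move: x1.
by rewrite /unit_sphere /= /vnorm2 big_ord0 sqrtr0 => /esym/eqP; rewrite oner_eq0.
Qed.

Lemma vnorm2_diag_mulmx_ge m (d : 'rV[C]_m) i y :
  (forall j, cabs (d 0 i) <= cabs (d 0 j)) ->
  cabs (d 0 i) * vnorm2 y <= vnorm2 (diag_mx d *m y).
Proof.
move=> d_min; rewrite -(@ler_pXn2r _ 2) ?nnegrE ?mulr_ge0 ?cabs_ge0 ?vnorm2_ge0 //.
rewrite exprMn !vnorm2_sqr mulr_sumr ler_sum // => j _.
rewrite mul_diag_mx mxE cabsM exprMn ler_wpM2r ?exprn_ge0 ?cabs_ge0 //.
by rewrite lerXn2r ?nnegrE ?cabs_ge0.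
Qed.

Lemma hermitian_min_eigenpair m (M : 'M[C]_m.+1) : Defs.hermitian M ->
  exists u (l : R), [/\ vnorm2 u = 1, M *m u = l%:C *: u & `|l| <= sigma_min M].
Proof.
move=> /hermitian_hermsymmx hM.
have /orthomx_spectralP M_eq := hermitian_normalmx hM.
have /mxOverP d_real := hermitian_spectral_diag_real hM.
move: M_eq d_real; set P := spectralmx M; set d := spectral_diag M => M_eq d_real.
have P_unitary : P \is unitarymx := spectral_unitarymx M.
have PPt : P *m ctrmx P = 1%:M by apply/unitarymxP.
have PtP : ctrmx P *m P = 1%:M.
  by rewrite [ctrmx P](esym (invmx_unitary P_unitary)) mulVmx ?unitarymx_unit.
rewrite invmx_unitary // in M_eq.
have [i _ i_min] := @arg_minP _ _ _ ord0 xpredT (fun j => cabs (d 0 j)) isT.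
pose l := complex.Re (d 0 i).
have dl : d 0 i = l%:C by apply: conj_fixed_realE; apply/CrealP/d_real.
have Mx_ge x : vnorm2 x = 1 -> `|l| <= vnorm2 (M *m x).
  move=> x1; rewrite M_eq -!mulmxA vnorm2_unitary ?ctrmxK // -cabs_real -dl.
  have := vnorm2_diag_mulmx_ge (P *m x) (fun j => i_min j isT).
  by rewrite (vnorm2_unitary _ PtP) x1 mulr1.
exists (ctrmx P *m delta_mx i 0), l; split.
- by rewrite vnorm2_unitary ?ctrmxK // vnorm2_delta.
- rewrite {1}M_eq -!mulmxA (mulmxA P) PPt mul1mx -dl scalemxAr.
  congr (_ *m _); apply/matrixP => j k; rewrite mul_diag_mx !mxE.
  by have [->|ji] := eqVneq j i; rewrite ?eqxx ?(negbTE ji) ?mulr0 ?mulr1n ?mulr0n.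
- apply: lb_le_inf; last by move=> _ [x x1 <-]; apply: Mx_ge.
  by exists (vnorm2 (M *m delta_mx 0 0)), (delta_mx 0 0) => //; apply: vnorm2_delta.
Qed.

Lemma CauchySchwarz_R2 (a b c d : R) :
  a * c + b * d <= Num.sqrt (a ^+ 2 + b ^+ 2) * Num.sqrt (c ^+ 2 + d ^+ 2).
Proof.
rewrite -sqrtrM ?addr_ge0 ?sqr_ge0 //; apply: le_trans (ler_norm _) _.
rewrite -sqrtr_sqr ler_wsqrtr //.
have -> : (a ^+ 2 + b ^+ 2) * (c ^+ 2 + d ^+ 2) =
          (a * c + b * d) ^+ 2 + (a * d - b * c) ^+ 2 by ring.
by rewrite lerDl sqr_ge0.
Qed.

Lemma Im_eq0_of_real_ratio (a b z : C) : Num.conj a = a -> Num.conj b = b ->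
  a + 'i * b != 0 -> a = z * b -> complex.Im z = 0.
Proof.
move=> a_real b_real ab0 az.
have b0 : b != 0 by apply: contra ab0 => /eqP b0; rewrite az b0 !mulr0 addr0.
have -> : z = a / b by rewrite az mulfK.
by rewrite (conj_fixed_realE a_real) (conj_fixed_realE b_real) -fmorph_div.
Qed.

Lemma perturbed_definite m (A B E F : 'M[C]_m) x :
  Defs.hermitian E -> Defs.hermitian F ->
  Num.sqrt (opnorm2 E ^+ 2 + opnorm2 F ^+ 2) < crawford A B -> vnorm2 x = 1 ->
  hdot x ((A + E) *m x) + 'i * hdot x ((B + F) *m x) != 0.
Proof.
move=> hE hF EF_lt x1.
have sqr_le (a b : R) : `|a| <= b -> a ^+ 2 <= b ^+ 2.
  move=> ab; rewrite -real_normK ?num_real // lerXn2r ?nnegrE //.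
  exact: le_trans ab.
have e_real := conj_fixed_realE (hermitian_hdot_real x hE).
have f_real := conj_fixed_realE (hermitian_hdot_real x hF).
have e_le := cabs_hdot_le_opnorm2 E x1; have f_le := cabs_hdot_le_opnorm2 F x1.
rewrite e_real cabs_real in e_le; rewrite f_real cabs_real in f_le.
rewrite !mulmxDl !hdotDr mulrDr addrACA.
apply: contraTneq (crawford_le A B x1) => /eqP; rewrite addr_eq0 => /eqP ->.
rewrite cabsN e_real f_real cabs_rect -ltNge; apply: le_lt_trans EF_lt.
by rewrite ler_wsqrtr // lerD // sqr_le.
Qed.

Lemma perturbed_eigenvalue_real m (A B E F : 'M[C]_m) x z :
  Defs.hermitian A -> Defs.hermitian B -> Defs.hermitian E -> Defs.hermitian F ->
  Num.sqrt (opnorm2 E ^+ 2 + opnorm2 F ^+ 2) < crawford A B -> vnorm2 x = 1 ->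
  (A + E) *m x = z *: ((B + F) *m x) -> complex.Im z = 0.
Proof.
move=> hA hB hE hF EF_lt x1 eig.
apply: (Im_eq0_of_real_ratio _ _ (perturbed_definite hE hF EF_lt x1)).
- exact/hermitian_hdot_real/hermitianD.
- exact/hermitian_hdot_real/hermitianD.
- by rewrite eig hdotZr.
Qed.

Lemma perturbed_eigen_residual m (A B E F : 'M[C]_m) x z :
  vnorm2 x = 1 -> (A + E) *m x = z *: ((B + F) *m x) ->
  sigma_min (A - z *: B) <=
  Num.sqrt (1 + cabs z ^+ 2) * Num.sqrt (opnorm2 E ^+ 2 + opnorm2 F ^+ 2).
Proof.
move=> x1 eig.
have res : (A - z *: B) *m x = z *: (F *m x) - E *m x.
  apply: (addIr (E *m x)); rewrite subrK mulmxBl -scalemxAl addrAC -mulmxDl eig.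
  by rewrite mulmxDl scalerDr addrAC subrr add0r.
apply: le_trans (sigma_min_le _ x1) _; rewrite res.
apply: le_trans (ler_vnorm2B _ _) _; rewrite vnorm2Z addrC.
have := CauchySchwarz_R2 1 (cabs z) (opnorm2 E) (opnorm2 F).
rewrite expr1n mul1r => CS; apply: le_trans CS.
by rewrite lerD ?ler_wpM2l ?cabs_ge0 ?opnorm2_ub_unit.
Qed.

Lemma sym_pseudospectrum_sub m (A B : 'M[C]_m) eps :
  Defs.hermitian A -> Defs.hermitian B -> eps < crawford A B ->
  sym_pseudospectrum eps A B `<=`
  [set z | sigma_min (A - z *: B) <= eps * Num.sqrt (1 + cabs z ^+ 2)]
  `&` [set z | complex.Im z = 0].
Proof.
move=> hA hB eps_lt z [u [E [F [u0 hE hF EF_le eig]]]].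
pose x := (vnorm2 u)^-1%:C *: u.
have x1 : vnorm2 x = 1 by apply: vnorm2_normalize.
have eigx : (A + E) *m x = z *: ((B + F) *m x).
  by rewrite -!scalemxAr eig !scalerA mulrC.
split => /=.
- apply: le_trans (perturbed_eigen_residual x1 eigx) _.
  by rewrite mulrC ler_wpM2r ?sqrtr_ge0.
- exact: perturbed_eigenvalue_real hA hB hE hF (le_lt_trans EF_le eps_lt) x1 eigx.
Qed.

Lemma real_sym_pseudospectrum m (A B : 'M[C]_m.+1) eps (r : R) :
  Defs.hermitian A -> Defs.hermitian B ->
  sigma_min (A - r%:C *: B) <= eps * Num.sqrt (1 + r ^+ 2) ->
  sym_pseudospectrum eps A B r%:C.
Proof.
move=> hA hB sigma_le.
have [u [l [u1 eig l_le]]] := hermitian_min_eigenpair (hermitianBZ r hA hB).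
pose t := 1 + r ^+ 2.
have t_gt0 : 0 < t by rewrite ltr_pwDl ?sqr_ge0.
exists u, (- l / t)%:C%:M, (r * l / t)%:C%:M; split.
- by apply: contra_eq_neq u1 => ->; rewrite vnorm2_0 eq_sym oner_neq0.
- exact: hermitian_real_scalar.
- exact: hermitian_real_scalar.
- rewrite !opnorm2_real_scalar !real_normK ?num_real //.
  have -> : (- l / t) ^+ 2 + (r * l / t) ^+ 2 = (l / Num.sqrt t) ^+ 2.
    by rewrite !expr_div_n sqr_sqrtr ?ltW // /t; field; apply: lt0r_neq0.
  rewrite sqrtr_sqr normf_div (ger0_norm (sqrtr_ge0 t)) ler_pdivrMr ?sqrtr_gt0 //.
  exact: le_trans l_le sigma_le.
- rewrite !mulmxDl !mul_scalar_mx.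
  have -> : A *m u = r%:C *: (B *m u) + l%:C *: u.
    by rewrite -eig mulmxBl -scalemxAl addrC subrK.
  rewrite scalerDr -addrA -scalerDl scalerA -!rmorphM -rmorphD.
  by congr (_ + _ *: u); congr (_%:C); rewrite /t; field; apply: lt0r_neq0.
Qed.

End PencilPseudospectrum.

Theorem lemma2p5 (R : realType) (n : nat) (A B : 'M[R[i]]_n) (eps : R) :
  definite_pencil A B ->
  0 < eps -> eps < crawford A B ->
  sym_pseudospectrum eps A B =
  [set z : R[i] | sigma_min (A - z *: B) <= eps * Num.sqrt (1 + cabs z ^+ 2)]
  `&` [set z : R[i] | complex.Im z = 0].
Proof.
move=> [hA hB crawford_gt0] _ eps_lt.
case: n A B hA hB crawford_gt0 eps_lt => [|m] A B hA hB crawford_gt0 eps_lt.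
  by move: crawford_gt0; rewrite crawford_dim0 ltxx.
apply/seteqP; split; first exact: sym_pseudospectrum_sub.
move=> [r s] [sigma_le /= s0]; subst s.
apply: real_sym_pseudospectrum => //.
by rewrite -real_normK ?num_real // -cabs_real.
Qed.
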